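(* Let $\beta>0$ and $k<0$ (so in particular $k<0<\frac{3}{3+\beta}$). Let \[f_{++}(x,y,z)=\beta(x^2y^2+y^2z^2+x^2z^2)+\Big(x^2+y^2+z^2+\tfrac12\Big)^2-\tfrac{1-k}{4}.\] Then the zero set $Q^{++}(k)=\{(x,y,z)\in\mathbb{R}^3: f_{++}(x,y,z)=0\}$ is a connected compact surface homeomorphic to a sphere.
   Context: $Q^{++}(k)$ is an octahedral quartic, i.e. $f_{++}$ is invariant under the group of $3\times 3$ signed permutation matrices. *)

From HB Require Import structures.
From mathcomp Require Import all_boot all_order all_algebra.
From mathcomp Require Import all_classical all_reals all_analysis.
Set Implicit Arguments. Unset Strict Implicit. Unset Printing Implicit Defensive.
Import Order.TTheory GRing.Theory Num.Theory.
Import numFieldNormedType.Exports.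
Local Open Scope ring_scope.
Local Open Scope classical_set_scope.

Notation pt3 R := (R * R * R)%type.

Definition fpp (R : realType) (beta k : R) (p : pt3 R) : R :=
  let x := p.1.1 in let y := p.1.2 in let z := p.2 in
  beta * (x ^+ 2 * y ^+ 2 + y ^+ 2 * z ^+ 2 + x ^+ 2 * z ^+ 2)
  + (x ^+ 2 + y ^+ 2 + z ^+ 2 + 2^-1) ^+ 2 - (1 - k) / 4.

Definition Qpp (R : realType) (beta k : R) : set (pt3 R) :=
  [set p | fpp beta k p = 0].

Definition sphere2 (R : realType) : set (pt3 R) :=
  [set p | p.1.1 ^+ 2 + p.1.2 ^+ 2 + p.2 ^+ 2 = 1].

Definition homeomorphic_sets (T U : topologicalType) (A : set T) (B : set U) : Prop :=
  exists (f : T -> U) (g : U -> T),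
    (forall a, A a -> B (f a)) /\
    (forall b, B b -> A (g b)) /\
    (forall a, A a -> g (f a) = a) /\
    (forall b, B b -> f (g b) = b) /\
    {within A, continuous f} /\
    {within B, continuous g}.

(* Scaling p by c turns f_{++} into A(p) (c^2)^2 + |p|^2 c^2 + k/4, where
   A(p) = beta (x^2 y^2 + y^2 z^2 + x^2 z^2) + |p|^4 > 0 for p <> 0.  As k < 0,
   this quadratic in c^2 has exactly one positive root, so each open ray from
   the origin meets Q^{++}(k) exactly once, at a point depending continuously
   on the ray.  Radial projection is then a homeomorphism between Q^{++}(k) and
   the unit sphere, and Q^{++}(k) is a continuous image of the connected set
   R^3 \ {0}.  Compactness holds because Q^{++}(k) is closed and |p|^2 <= -k/4
   on it. *)

From HB Require Import structures.
From mathcomp Require Import all_boot all_order all_algebra.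
From mathcomp Require Import all_classical all_reals all_analysis.
From mathcomp Require Import ring lra.
Import Order.TTheory GRing.Theory Num.Theory.
Import numFieldNormedType.Exports.
Local Open Scope ring_scope.
Local Open Scope classical_set_scope.

Set Implicit Arguments.
Unset Strict Implicit.
Unset Printing Implicit Defensive.

Definition pos_root {R : rcfType} (a b c : R) :=
  (- b + Num.sqrt (b ^+ 2 - 4 * a * c)) / (2 * a).

Section PositiveRoot.
Variables (R : rcfType) (a b c : R).
Hypotheses (a_gt0 : 0 < a) (b_ge0 : 0 <= b) (c_lt0 : c < 0).

Let discr_gt_sqr : b ^+ 2 < b ^+ 2 - 4 * a * c.
Proof. by rewrite ltrDl oppr_gt0 pmulr_rlt0 ?mulr_gt0. Qed.

Lemma pos_root_gt0 : 0 < pos_root a b c.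
Proof.
rewrite divr_gt0 ?mulr_gt0 // addrC subr_gt0 -{1}(ger0_norm b_ge0) -sqrtr_sqr.
rewrite ltr_sqrt //; exact: le_lt_trans (sqr_ge0 b) discr_gt_sqr.
Qed.

Lemma pos_rootP w : 0 < w -> a * w ^+ 2 + b * w + c = 0 <-> w = pos_root a b c.
Proof.
move=> w_gt0; have a_neq0 : a != 0 by rewrite gt_eqF.
have discr_ge0 : 0 <= b ^+ 2 - 4 * a * c := le_trans (sqr_ge0 b) (ltW discr_gt_sqr).
have square : 4 * a * (a * w ^+ 2 + b * w + c) =
  (2 * a * w + b) ^+ 2 - (b ^+ 2 - 4 * a * c) by ring.
have -> : (w = pos_root a b c) <-> (2 * a * w + b = Num.sqrt (b ^+ 2 - 4 * a * c)).
  by split=> [->|e]; rewrite /pos_root; [field|rewrite -e; field].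
have lin_ge0 : 0 <= 2 * a * w + b by rewrite addr_ge0 // ltW // !mulr_gt0.
split=> [root|lin_eq].
- apply/eqP; rewrite -(eqrXn2 (n := 2)) ?sqrtr_ge0 // sqr_sqrtr //.
  by rewrite -subr_eq0 -square root mulr0.
- apply: (mulfI (_ : 4 * a != 0)); first by rewrite mulf_neq0 ?pnatr_eq0.
  by rewrite mulr0 square lin_eq sqr_sqrtr // subrr.
Qed.

End PositiveRoot.

Lemma sqr_continuous (T : topologicalType) (R : realType) (f : T -> R) (x : T) :
  {for x, continuous f} -> {for x, continuous (fun t => f t ^+ 2)}.
Proof. by move=> cf; exact: (continuous_comp cf (@exprn_continuous R 2 (f x))). Qed.

Lemma pos_root_continuous (T : topologicalType) (R : realType)
    (a b : T -> R) (c : R) (x : T) :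
  a x != 0 -> {for x, continuous a} -> {for x, continuous b} ->
  {for x, continuous (fun y => pos_root (a y) (b y) c)}.
Proof.
move=> ax_neq0 ca cb.
have c4a : {for x, continuous (fun y => 4 * a y * c)}.
  by apply: cvgM; [apply: cvgM; [exact: cvg_cst|]|exact: cvg_cst].
have cdiscr : {for x, continuous (fun y => b y ^+ 2 - 4 * a y * c)}.
  by apply: cvgB; [exact: sqr_continuous|].
apply: cvgM.
  by apply: cvgD; [exact: cvgN|exact: continuous_comp cdiscr (@sqrt_continuous R _)].
by apply: cvgV; [rewrite mulf_neq0 ?pnatr_eq0|apply: cvgM; [exact: cvg_cst|]].
Qed.

Lemma sqr_le_itv_sqrt (R : rcfType) (x M : R) :
  x ^+ 2 <= M -> - Num.sqrt M <= x <= Num.sqrt M.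
Proof. by move=> le; rewrite -ler_norml -sqrtr_sqr ler_wsqrtr. Qed.

Definition line_segment {R : numDomainType} {V : lmodType R} (a b : V) : set V :=
  [set (1 - t) *: a + t *: b | t in `[0, 1]].

Lemma line_segment_connected (R : realType) (V : normedModType R) (a b : V) :
  connected (line_segment a b).
Proof.
apply: connected_continuous_connected; first exact: segment_connected.
apply: continuous_subspaceT => t.
have c1 : {for t, continuous (fun s : R => 1 - s)}.
  by apply: cvgB; [exact: cvg_cst|exact: cvg_id].
by apply: cvgD; apply: cvgZ; [exact: c1|exact: cvg_cst|exact: cvg_id|exact: cvg_cst].
Qed.

Lemma line_segment_l (R : numDomainType) (V : lmodType R) (a b : V) :
  line_segment a b a.
Proof.
by exists 0; rewrite /= ?in_itv /= ?lexx ?ler01 // subr0 scale1r scale0r addr0.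
Qed.

Lemma line_segment_r (R : numDomainType) (V : lmodType R) (a b : V) :
  line_segment a b b.
Proof.
by exists 1; rewrite /= ?in_itv /= ?lexx ?ler01 // subrr scale0r scale1r add0r.
Qed.

Lemma star_connected (R : realType) (V : normedModType R) (S : set V) (b : V) :
  connected (\bigcup_(q in [set q | line_segment b q `<=` S]) line_segment b q).
Proof.
apply: bigcup_connected => [|q _]; last exact: line_segment_connected.
by exists b => q _; exact: line_segment_l.
Qed.

Lemma line_segments_opposite_eq0 (R : realFieldType) (V : lmodType R) (a q : V) :
  a != 0 -> line_segment a q 0 -> line_segment (- a) q 0 -> q = 0.
Proof.
move=> a_neq0 [t t01 et] [s s01 es].
move: t01 s01; rewrite /= !in_itv /= => /andP[t_ge0 t_le1] /andP[s_ge0 s_le1].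
have : s *: ((1 - t) *: a + t *: q) - t *: ((1 - s) *: - a + s *: q) =
    (s * (1 - t) + t * (1 - s)) *: a.
  rewrite !scalerDr !scalerA scalerN scalerDl [t * s]mulrC.
  by rewrite opprD opprK addrA (addrAC _ _ ((_ * (1 - s)) *: a)) addrK.
rewrite et es !scaler0 subr0 => /esym/eqP; rewrite scaler_eq0 (negPf a_neq0) orbF.
rewrite paddr_eq0 ?mulr_ge0 ?subr_ge0 // => /andP[_].
rewrite mulf_eq0 subr_eq0 => /orP[/eqP t0|/eqP s1].
  by move: et a_neq0; rewrite t0 subr0 scale1r scale0r addr0 => ->; rewrite eqxx.
by move: es; rewrite -s1 subrr scale0r add0r scale1r.
Qed.

Section Space3.
Variable R : realType.
Implicit Types (p q : pt3 R) (c : R).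

Definition sqnorm3 p := p.1.1 ^+ 2 + p.1.2 ^+ 2 + p.2 ^+ 2.
Definition cross4 p :=
  p.1.1 ^+ 2 * p.1.2 ^+ 2 + p.1.2 ^+ 2 * p.2 ^+ 2 + p.1.1 ^+ 2 * p.2 ^+ 2.

Lemma sqnorm3_ge0 p : 0 <= sqnorm3 p.
Proof. by rewrite /sqnorm3 !addr_ge0 // sqr_ge0. Qed.

Lemma cross4_ge0 p : 0 <= cross4 p.
Proof. by rewrite /cross4 !addr_ge0 // mulr_ge0 // sqr_ge0. Qed.

Lemma sqnorm3_eq0 p : (sqnorm3 p == 0) = (p == 0).
Proof.
case: p => [[x y] z]; rewrite /sqnorm3 /= !paddr_eq0 ?addr_ge0 ?sqr_ge0 //.
by rewrite !sqrf_eq0 !xpair_eqE.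
Qed.

Lemma scale3E c p : c *: p = ((c * p.1.1, c * p.1.2), c * p.2).
Proof. by []. Qed.

Lemma sqnorm3Z c p : sqnorm3 (c *: p) = c ^+ 2 * sqnorm3 p.
Proof. rewrite /sqnorm3 scale3E /=; ring. Qed.

Lemma sqr_coord_le_sqnorm3 p :
  [/\ p.1.1 ^+ 2 <= sqnorm3 p, p.1.2 ^+ 2 <= sqnorm3 p & p.2 ^+ 2 <= sqnorm3 p].
Proof.
have := sqr_ge0 p.1.1; have := sqr_ge0 p.1.2; have := sqr_ge0 p.2.
rewrite /sqnorm3; split; lra.
Qed.

Lemma coord_continuous :
  [/\ continuous (fun p : pt3 R => p.1.1), continuous (fun p : pt3 R => p.1.2)
    & continuous (fun p : pt3 R => p.2)].
Proof.
by split=> p; [apply: continuous_comp; exact: cvg_fst|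
  apply: continuous_comp; [exact: cvg_fst|exact: cvg_snd]|exact: cvg_snd].
Qed.

Lemma sqnorm3_continuous : continuous sqnorm3.
Proof.
move=> p; have [/(_ p)/sqr_continuous x2 /(_ p)/sqr_continuous y2
  /(_ p)/sqr_continuous z2] := coord_continuous.
by apply: cvgD; [apply: cvgD|].
Qed.

Lemma cross4_continuous : continuous cross4.
Proof.
move=> p; have [/(_ p)/sqr_continuous x2 /(_ p)/sqr_continuous y2
  /(_ p)/sqr_continuous z2] := coord_continuous.
by apply: cvgD; [apply: cvgD|]; apply: cvgM.
Qed.

End Space3.

Lemma punctured3_connected (R : realType) : connected [set p : pt3 R | p != 0].
Proof.
set X := [set p | p != 0].
pose e3 : pt3 R := ((0, 0), 1); pose e1 : pt3 R := ((1, 0), 0).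
have e3_neq0 : e3 != 0 by rewrite !xpair_eqE oner_eq0 andbF.
have e1_star s : s != 0 -> line_segment (s *: e3) e1 `<=` X.
  move=> s_neq0 _ [t _ <-].
  rewrite (_ : _ + _ = ((t, 0), (1 - t) * s)); last first.
    by rewrite /e3 /e1 !scale3E /=; congr ((_, _), _); rewrite /GRing.scale /=; ring.
  rewrite /X /= !xpair_eqE.
  by apply/negP => /andP[/andP[/eqP -> _]]; rewrite subr0 mul1r (negPf s_neq0).
set star := fun b : pt3 R =>
  \bigcup_(q in [set q | line_segment b q `<=` X]) line_segment b q.
have -> : X = star e3 `|` star (- e3).
  apply/seteqP; split=> [q q_neq0|q [] [p seg_sub /seg_sub //]].
  have [sub|/nonsubset[u [seg_u /negP/negPn/eqP u0]]] :=
      pselect (line_segment e3 q `<=` X).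
    by left; exists q => //; exact: line_segment_r.
  have [sub|/nonsubset[v [seg_v /negP/negPn/eqP v0]]] :=
      pselect (line_segment (- e3) q `<=` X).
    by right; exists q => //; exact: line_segment_r.
  rewrite u0 in seg_u; rewrite v0 in seg_v.
  by move: q_neq0; rewrite /X /= (line_segments_opposite_eq0 e3_neq0 seg_u seg_v) eqxx.
apply: connectedU; [|exact: star_connected|exact: star_connected].
exists e1; split; exists e1; try exact: line_segment_r.
  by rewrite /= -[e3]scale1r; apply: e1_star; exact: oner_neq0.
by rewrite /= -scaleN1r; apply: e1_star; rewrite oppr_eq0 oner_neq0.
Qed.

Section Normalization.
Variable R : realType.
Implicit Types (p b : pt3 R) (c : R).

Definition normalize3 p := (Num.sqrt (sqnorm3 p))^-1 *: p.

Lemma sqnorm3_gt0 p : p != 0 -> 0 < sqnorm3 p.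
Proof. by move=> p_neq0; rewrite lt_def sqnorm3_eq0 p_neq0 sqnorm3_ge0. Qed.

Lemma sphere2_neq0 b : sphere2 b -> b != 0.
Proof. by rewrite -sqnorm3_eq0 /sqnorm3 => ->; exact: oner_neq0. Qed.

Lemma normalize3_sphere2 p : p != 0 -> sphere2 (normalize3 p).
Proof.
move=> p_neq0; rewrite /sphere2 /= -/(sqnorm3 (normalize3 p)) /normalize3.
rewrite sqnorm3Z exprVn.
by rewrite sqr_sqrtr ?sqnorm3_ge0 // mulVf // gt_eqF ?sqnorm3_gt0.
Qed.

Lemma normalize3Z c p : 0 < c -> normalize3 (c *: p) = normalize3 p.
Proof.
move=> c_gt0; rewrite /normalize3 sqnorm3Z sqrtrM ?sqr_ge0 // sqrtr_sqr gtr0_norm //.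
have [->|p_neq0] := eqVneq p 0; first by rewrite !scaler0.
by rewrite scalerA invfM mulrAC mulVf ?gt_eqF // mul1r.
Qed.

Lemma normalize3_id b : sphere2 b -> normalize3 b = b.
Proof.
by rewrite /sphere2 /normalize3 /sqnorm3 /= => ->; rewrite sqrtr1 invr1 scale1r.
Qed.

Lemma normalize3_continuous p : p != 0 -> {for p, continuous normalize3}.
Proof.
move=> p_neq0.
have csqrt : {for p, continuous (fun q => Num.sqrt (sqnorm3 q))} :=
  continuous_comp (@sqnorm3_continuous R p) (@sqrt_continuous R _).
apply: cvgZ (cvgV _ csqrt) cvg_id.
by rewrite gt_eqF // sqrtr_gt0 sqnorm3_gt0.
Qed.

End Normalization.

Section QuarticSurface.
Variables (R : realType) (beta k : R).
Hypotheses (beta_gt0 : 0 < beta) (k_lt0 : k < 0).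
Implicit Types (p q : pt3 R) (c : R).

Definition fpp_lead p := beta * cross4 p + sqnorm3 p ^+ 2.

Lemma fpp_lead_gt0 p : p != 0 -> 0 < fpp_lead p.
Proof.
move=> p_neq0; apply: ltr_wpDl; first exact: mulr_ge0 (ltW beta_gt0) (cross4_ge0 p).
by rewrite exprn_gt0 ?sqnorm3_gt0.
Qed.

Lemma fppZ c p :
  fpp beta k (c *: p) = fpp_lead p * (c ^+ 2) ^+ 2 + sqnorm3 p * c ^+ 2 + k / 4.
Proof. by rewrite /fpp /fpp_lead /sqnorm3 /cross4 scale3E /=; field. Qed.

Lemma fppE p : fpp beta k p = fpp_lead p + sqnorm3 p + k / 4.
Proof. by rewrite -{1}[p]scale1r fppZ !expr1n !mulr1. Qed.

Definition radius p := Num.sqrt (pos_root (fpp_lead p) (sqnorm3 p) (k / 4)).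

Let k4_lt0 : k / 4 < 0.
Proof. by rewrite pmulr_llt0 ?invr_gt0. Qed.

Lemma Qpp_scaleP c p : p != 0 -> 0 < c -> Qpp beta k (c *: p) <-> c = radius p.
Proof.
move=> p_neq0 c_gt0; rewrite /Qpp /= fppZ pos_rootP ?fpp_lead_gt0 ?sqnorm3_ge0 //;
  last by rewrite exprn_gt0.
rewrite /radius; split=> [<-|->]; first by rewrite sqrtr_sqr gtr0_norm.
by rewrite sqr_sqrtr // ltW // pos_root_gt0 ?fpp_lead_gt0 ?sqnorm3_ge0.
Qed.

Lemma radius_gt0 p : p != 0 -> 0 < radius p.
Proof. by move=> p_neq0; rewrite sqrtr_gt0 pos_root_gt0 ?fpp_lead_gt0 ?sqnorm3_ge0. Qed.

Lemma Qpp_neq0 q : Qpp beta k q -> q != 0.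
Proof.
apply: contraPneq => ->; rewrite /Qpp /= -(scale0r (0 : pt3 R)) fppZ expr0n /=.
by rewrite expr0n /= !mulr0 !add0r; apply/eqP; rewrite lt_eqF.
Qed.

Definition radial_proj p := radius p *: p.

Lemma radial_proj_Qpp p : p != 0 -> Qpp beta k (radial_proj p).
Proof. by move=> p_neq0; apply/Qpp_scaleP => //; exact: radius_gt0. Qed.

Lemma radial_projZ c p : p != 0 -> 0 < c -> radial_proj (c *: p) = radial_proj p.
Proof.
move=> p_neq0 c_gt0; have cp_neq0 : c *: p != 0 by rewrite scaler_eq0 negb_or gt_eqF.
have := radial_proj_Qpp cp_neq0; rewrite /radial_proj scalerA.
by move/Qpp_scaleP => -> //; rewrite mulr_gt0 ?radius_gt0.
Qed.

Lemma radial_proj_id q : Qpp beta k q -> radial_proj q = q.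
Proof.
move=> Qq; have q_neq0 := Qpp_neq0 Qq.
have := (Qpp_scaleP q_neq0 ltr01).1; rewrite scale1r => /(_ Qq) radius1.
by rewrite /radial_proj -radius1 scale1r.
Qed.

Lemma fpp_lead_continuous : continuous fpp_lead.
Proof.
move=> p; apply: cvgD; first by apply: cvgM; [exact: cvg_cst|exact: cross4_continuous].
exact: sqr_continuous (@sqnorm3_continuous R p).
Qed.

Lemma radial_proj_continuous p : p != 0 -> {for p, continuous radial_proj}.
Proof.
move=> p_neq0; have clead := @fpp_lead_continuous p.
have croot : {for p, continuous (fun q => pos_root (fpp_lead q) (sqnorm3 q) (k / 4))}.
  apply: pos_root_continuous => //; last exact: sqnorm3_continuous.
  by rewrite gt_eqF ?fpp_lead_gt0.
exact: cvgZ (continuous_comp croot (@sqrt_continuous R _)) cvg_id.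
Qed.

Lemma Qpp_radial_image : Qpp beta k = radial_proj @` [set p | p != 0].
Proof.
apply/seteqP; split=> [q Qq|_ [p p_neq0 <-]]; last exact: radial_proj_Qpp.
by exists q; [exact: Qpp_neq0|exact: radial_proj_id].
Qed.

Lemma Qpp_sqnorm3_le q : Qpp beta k q -> sqnorm3 q <= - k / 4.
Proof.
move=> Qq; have := fpp_lead_gt0 (Qpp_neq0 Qq).
by move: Qq; rewrite /Qpp /= fppE; lra.
Qed.

Lemma fpp_continuous : continuous (fpp beta k).
Proof.
have -> : fpp beta k = fun q => fpp_lead q + sqnorm3 q + k / 4.
  by apply: funext => q; rewrite fppE.
move=> p; apply: cvgD; last exact: cvg_cst.
by apply: cvgD; [exact: fpp_lead_continuous|exact: sqnorm3_continuous].
Qed.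

Lemma Qpp_compact : compact (Qpp beta k).
Proof.
have Qpp_closed : closed (Qpp beta k).
  exact: (continuous_closedP (fpp beta k)).1 fpp_continuous _ (@closed_eq R 0).
pose I := `[- Num.sqrt (- k / 4), Num.sqrt (- k / 4)] : set R.
have I_compact : compact I by exact: segment_compact.
apply: (subclosed_compact Qpp_closed
  (compact_setX (compact_setX I_compact I_compact) I_compact)).
move=> q Qq; have [x_le y_le z_le] := sqr_coord_le_sqnorm3 q.
have le := Qpp_sqnorm3_le Qq.
by split; [split|]; rewrite /I /= in_itv /=; apply: sqr_le_itv_sqrt; exact: le_trans le.
Qed.

Lemma Qpp_connected : connected (Qpp beta k).
Proof.
rewrite Qpp_radial_image; apply: connected_continuous_connected.
  exact: punctured3_connected.
by apply: continuous_in_subspaceT => p; rewrite inE; exact: radial_proj_continuous.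
Qed.

Lemma Qpp_homeomorphic_sphere2 : homeomorphic_sets (Qpp beta k) (@sphere2 R).
Proof.
exists (@normalize3 R), radial_proj; split; [|split; [|split; [|split; [|split]]]].
- by move=> q /Qpp_neq0; exact: normalize3_sphere2.
- by move=> b /sphere2_neq0; exact: radial_proj_Qpp.
- move=> q Qq; have q_neq0 := Qpp_neq0 Qq.
  by rewrite /normalize3 radial_projZ ?radial_proj_id // invr_gt0 sqrtr_gt0 sqnorm3_gt0.
- move=> b b_sphere; have b_neq0 := sphere2_neq0 b_sphere.
  by rewrite /radial_proj normalize3Z ?radius_gt0 // normalize3_id.
- apply: continuous_in_subspaceT => q; rewrite inE => /Qpp_neq0.
  exact: normalize3_continuous.
- apply: continuous_in_subspaceT => b; rewrite inE => /sphere2_neq0.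
  exact: radial_proj_continuous.
Qed.

End QuarticSurface.

Theorem lemma1 (R : realType) (beta k : R) (hbeta : 0 < beta) (hk : k < 0) :
  [/\ compact (Qpp beta k : set (R * R * R)%type),
      connected (Qpp beta k : set (R * R * R)%type)
    & homeomorphic_sets (Qpp beta k : set (R * R * R)%type)
                        (@sphere2 R : set (R * R * R)%type)].
Proof.
split; [exact: Qpp_compact|exact: Qpp_connected|exact: Qpp_homeomorphic_sphere2].
Qed.
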